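(* Let $A$ and $B$ be convex subsets of $\mathbb R^2$ and let $k\ge 0$ be an integer. Assume $A$ contains a circle of radius $r$ and $B$ contains a circle of radius $R$, such that $rR\ge\frac{1}{2^k}(1+\sqrt2)^2$. Then the scaled grid problem over $\mathbb Z[\omega]$ for $A$, $B$ and $k$ has at least $2$ solutions.
   Context: Let $\omega=e^{i\pi/4}$ and $\mathbb Z[\omega]=\{a_0+a_1\omega+a_2\omega^2+a_3\omega^3: a_j\in\mathbb Z\}\subseteq\mathbb C\cong\mathbb R^2$, with automorphism $(a_0+a_1\omega+a_2\omega^2+a_3\omega^3)^\bullet=a_0-a_1\omega+a_2\omega^2-a_3\omega^3$. A solution of the scaled grid problem over $\mathbb Z[\omega]$ for $A$, $B$ and $k$ is a $u\in\mathbb Z[\omega]$ with $u\in\sqrt2^{\,k}A$ and $u^\bullet\in(-\sqrt2)^kB$. ''Contains a circle of radius $r$'' means contains a closed disk of radius $r$. *)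

(* the plane R^2 = C is modelled as R * R (real, imaginary part). *)
From Stdlib Require Import Reals ZArith.
Open Scope R_scope.

Definition point := (R * R)%type.

Definition convex (A : point -> Prop) : Prop :=
  forall p q : point, A p -> A q -> forall t : R, 0 <= t <= 1 ->
    A ((1 - t) * fst p + t * fst q, (1 - t) * snd p + t * snd q).

Definition disk (c : point) (r : R) : point -> Prop :=
  fun p => (fst p - fst c) ^ 2 + (snd p - snd c) ^ 2 <= r ^ 2.

Definition contains_circle (A : point -> Prop) (r : R) : Prop :=
  exists c : point, forall p, disk c r p -> A p.

Definition scale_set (s : R) (A : point -> Prop) : point -> Prop :=
  fun p => exists a, A a /\ p = (s * fst a, s * snd a).

(* Elements of Z[omega], omega = e^{i pi/4}, given by coefficients
   (a0,a1,a2,a3) of a0 + a1 w + a2 w^2 + a3 w^3. *)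
Record Zomega := mkZomega { za0 : Z; za1 : Z; za2 : Z; za3 : Z }.

(* Complex value: w = (1+i)/sqrt2, w^2 = i, w^3 = (-1+i)/sqrt2. *)
Definition Zomega_val (u : Zomega) : point :=
  (IZR (za0 u) + (IZR (za1 u) - IZR (za3 u)) / sqrt 2,
   IZR (za2 u) + (IZR (za1 u) + IZR (za3 u)) / sqrt 2).

Definition Zomega_bullet (u : Zomega) : Zomega :=
  mkZomega (za0 u) (- za1 u)%Z (za2 u) (- za3 u)%Z.

Definition scaled_grid_solution (A B : point -> Prop) (k : nat) (u : Zomega) : Prop :=
  scale_set (sqrt 2 ^ k) A (Zomega_val u) /\
  scale_set ((- sqrt 2) ^ k) B (Zomega_val (Zomega_bullet u)).

(* Writing u = (a + m sqrt 2) + i (c + n sqrt 2), the conditions on u and u^bullet split into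
   one-dimensional grid problems over Z[sqrt 2], one per coordinate: find a + m sqrt 2 in an
   interval I with a - m sqrt 2 in an interval J.  When |I|, |J| >= 2 and |I| + |J| >= 4 + 2 sqrt 2,
   a suitable m makes the two windows for a overlap by 2, giving two solutions.  Multiplying by the
   unit 1 + sqrt 2 stretches I and shrinks J by the same factor, so |I| |J| >= 2 (1 + sqrt 2)^2
   suffices.  The squares inscribed in the two scaled disks give intervals of exactly this area. *)
From Stdlib Require Import Reals ZArith Lra Psatz.
Open Scope R_scope.

Lemma sqrt2_sq : sqrt 2 * sqrt 2 = 2.
Proof. apply sqrt_sqrt; lra. Qed.

Lemma sqrt2_bounds : 1.41 < sqrt 2 < 1.42.
Proof. pose proof sqrt2_sq; pose proof (sqrt_lt_R0 2 ltac:(lra)); split; nra. Qed.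

Definition silver : R := 1 + sqrt 2.

Lemma silver_bounds : 2.41 < silver < 2.42.
Proof. unfold silver; pose proof sqrt2_bounds; lra. Qed.

Lemma silver_sq : silver ^ 2 = 2 * silver + 1.
Proof. unfold silver; pose proof sqrt2_sq; nra. Qed.

Lemma silver_inv : / silver = sqrt 2 - 1.
Proof.
  pose proof silver_bounds; pose proof silver_sq.
  apply (Rmult_eq_reg_l silver); [|lra]; rewrite Rinv_r; unfold silver in *; nra.
Qed.

Definition rt2 (a b : Z) : R := IZR a + IZR b * sqrt 2.
Definition rt2_conj (a b : Z) : R := IZR a - IZR b * sqrt 2.

Lemma rt2_mul p q a b : rt2 (p * a + 2 * q * b) (p * b + q * a) = rt2 p q * rt2 a b.
Proof.
  unfold rt2; rewrite !plus_IZR, !mult_IZR.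
  pose proof sqrt2_sq as E; set (s := sqrt 2) in *; rewrite <- E; ring.
Qed.

Lemma rt2_conj_mul p q a b :
  rt2_conj (p * a + 2 * q * b) (p * b + q * a) = rt2_conj p q * rt2_conj a b.
Proof.
  unfold rt2_conj; rewrite !plus_IZR, !mult_IZR.
  pose proof sqrt2_sq as E; set (s := sqrt 2) in *; rewrite <- E; ring.
Qed.

Lemma rt2_silver : rt2 1 1 = silver.
Proof. unfold rt2, silver; simpl; ring. Qed.

Lemma rt2_conj_silver : rt2_conj 1 1 = - / silver.
Proof. rewrite silver_inv; unfold rt2_conj; simpl; ring. Qed.

Lemma rt2_silver_inv : rt2 (-1) 1 = / silver.
Proof. rewrite silver_inv; unfold rt2; simpl; ring. Qed.

Lemma rt2_conj_silver_inv : rt2_conj (-1) 1 = - silver.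
Proof. unfold rt2_conj, silver; simpl; ring. Qed.

Definition grid_point (x1 x2 y1 y2 : R) (a b : Z) : Prop :=
  x1 <= rt2 a b <= x2 /\ y1 <= rt2_conj a b <= y2.

Definition two_grid_points (x1 x2 y1 y2 : R) : Prop :=
  exists a1 b1 a2 b2, rt2 a1 b1 <> rt2 a2 b2 /\
    grid_point x1 x2 y1 y2 a1 b1 /\ grid_point x1 x2 y1 y2 a2 b2.

Lemma grid_point_mul p q a b x1 x2 y1 y2 :
  0 < rt2 p q -> rt2_conj p q < 0 -> grid_point x1 x2 y1 y2 a b ->
  grid_point (rt2 p q * x1) (rt2 p q * x2) (rt2_conj p q * y2) (rt2_conj p q * y1)
    (p * a + 2 * q * b) (p * b + q * a).
Proof.
  intros Hpos Hneg [[Hx1 Hx2] [Hy1 Hy2]].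
  unfold grid_point; rewrite rt2_mul, rt2_conj_mul.
  repeat split; nra.
Qed.

Lemma two_grid_points_mul p q x1 x2 y1 y2 X1 X2 Y1 Y2 :
  0 < rt2 p q -> rt2_conj p q < 0 ->
  X1 = rt2 p q * x1 -> X2 = rt2 p q * x2 -> Y1 = rt2_conj p q * y2 -> Y2 = rt2_conj p q * y1 ->
  two_grid_points x1 x2 y1 y2 -> two_grid_points X1 X2 Y1 Y2.
Proof.
  intros Hpos Hneg -> -> -> -> (a1 & b1 & a2 & b2 & Hne & H1 & H2).
  exists (p * a1 + 2 * q * b1)%Z, (p * b1 + q * a1)%Z,
         (p * a2 + 2 * q * b2)%Z, (p * b2 + q * a2)%Z.
  split; [|split; apply grid_point_mul; assumption].
  rewrite !rt2_mul; intros E; apply Rmult_eq_reg_l in E; lra.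
Qed.

Lemma exists_int_multiple_between s lo hi :
  0 < s -> lo + s <= hi -> exists b : Z, lo <= IZR b * s <= hi.
Proof.
  intros Hs Hhi; destruct (archimed (lo / s)) as [Hup1 Hup2].
  exists (up (lo / s)).
  assert (Hlo : lo = lo / s * s) by (field; lra).
  split; nra.
Qed.

Lemma two_grid_points_of_wide x1 x2 y1 y2 :
  2 <= x2 - x1 -> 2 <= y2 - y1 -> 4 + 2 * sqrt 2 <= (x2 - x1) + (y2 - y1) ->
  two_grid_points x1 x2 y1 y2.
Proof.
  intros Hx Hy Hsum; pose proof sqrt2_bounds.
  (* [b] is chosen so that the windows for [a] cut out by the two intervals overlap by at least 2. *)
  destruct (exists_int_multiple_between (2 * sqrt 2) (x1 - y2 + 2) (x2 - y1 - 2))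
    as [b Hb]; [lra | lra |].
  set (t := IZR b * sqrt 2).
  set (lo := Rmax (x1 - t) (y1 + t)).
  assert (Hlo : x1 - t <= lo /\ y1 + t <= lo) by (split; [apply Rmax_l | apply Rmax_r]).
  assert (Hhi : lo + 2 <= x2 - t /\ lo + 2 <= y2 + t).
  { unfold t in *; split; apply Rplus_le_reg_r with (-2); ring_simplify;
      apply Rmax_lub; lra. }
  destruct (archimed lo) as [Hup1 Hup2].
  exists (up lo), b, (up lo + 1)%Z, b.
  unfold grid_point, rt2, rt2_conj; rewrite plus_IZR; fold t.
  repeat split; lra.
Qed.

Lemma two_grid_points_of_normalized x1 y1 d D :
  2 <= d <= 2 * silver -> 0 < D -> 2 * silver ^ 2 <= d * D ->
  two_grid_points x1 (x1 + d) y1 (y1 + D).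
Proof.
  intros Hd HD Harea; pose proof silver_bounds; pose proof silver_sq.
  assert (HDsilver : silver <= D) by nra.
  (* AM-GM: (d + D)^2 >= 4 d D >= 8 silver^2 = (2 silver + 2)^2 *)
  assert (Hsum : (2 * silver + 2) ^ 2 <= (d + D) ^ 2).
  { replace ((2 * silver + 2) ^ 2) with (8 * silver ^ 2) by nra.
    pose proof (pow2_ge_0 (d - D)); nra. }
  apply two_grid_points_of_wide; unfold silver in *; nra.
Qed.

Section ScaleInvariance.

Variables (P : R -> Prop) (l c : R).
Hypothesis l_gt1 : 1 < l.
Hypothesis c_pos : 0 < c.
Hypothesis P_fundamental : forall d, c <= d <= l * c -> P d.
Hypothesis P_scale : forall d, 0 < d -> P d <-> P (l * d).

Lemma scale_invariant_above n d : c <= d <= l ^ n * c -> P d.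
Proof.
  revert d; induction n as [|n IH]; intros d Hd.
  - simpl in Hd; apply P_fundamental; nra.
  - destruct (Rle_dec d (l * c)) as [Hdc|Hdc]; [apply P_fundamental; lra|].
    replace d with (l * (d / l)) by (field; lra).
    apply (P_scale (d / l)); [apply Rdiv_lt_0_compat; lra|].
    apply IH; split.
    + apply Rmult_le_reg_l with l; [lra|]; replace (l * (d / l)) with d by (field; lra); lra.
    + apply Rmult_le_reg_l with l; [lra|]; replace (l * (d / l)) with d by (field; lra).
      simpl in Hd; lra.
Qed.

Lemma scale_invariant_below n d : 0 < d -> c <= l ^ n * d -> d <= l * c -> P d.
Proof.
  revert d; induction n as [|n IH]; intros d Hd Hc Hdc.
  - simpl in Hc; apply P_fundamental; lra.
  - destruct (Rle_dec c d) as [Hcd|Hcd]; [apply P_fundamental; lra|].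
    apply (P_scale d); [lra|].
    apply IH; simpl in Hc; nra.
Qed.

Lemma scale_invariant_pos d : 0 < d -> P d.
Proof.
  intros Hd.
  assert (Hpow : forall b, exists n, b <= l ^ n).
  { intros b; destruct (Pow_x_infinity l ltac:(rewrite Rabs_pos_eq; lra) b) as [N HN].
    exists N; specialize (HN N (le_n N)).
    rewrite Rabs_pos_eq in HN; [lra | apply pow_le; lra]. }
  destruct (Rle_dec c d) as [Hcd|Hcd].
  - destruct (Hpow (d / c)) as [n Hn].
    apply (scale_invariant_above n); split; [lra|].
    replace d with (d / c * c) by (field; lra); apply Rmult_le_compat_r; lra.
  - destruct (Hpow (c / d)) as [n Hn].
    apply (scale_invariant_below n); [lra| |nra].
    replace c with (c / d * d) by (field; lra); apply Rmult_le_compat_r; lra.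
Qed.

End ScaleInvariance.

Definition grid_solvable_width (d : R) : Prop :=
  forall x1 y1 D, 0 < D -> 2 * silver ^ 2 <= d * D ->
    two_grid_points x1 (x1 + d) y1 (y1 + D).

Lemma grid_solvable_width_scale d :
  0 < d -> grid_solvable_width d <-> grid_solvable_width (silver * d).
Proof.
  intros Hd; pose proof silver_bounds as Hs.
  assert (Hs0 : silver <> 0) by lra.
  assert (Hinv : 0 < / silver) by (apply Rinv_0_lt_compat; lra).
  split; intros Hsolv x1 y1 D HD Harea.
  - apply (two_grid_points_mul 1 1 (/ silver * x1) (/ silver * x1 + d)
             (- silver * (y1 + D)) (- silver * (y1 + D) + silver * D));
      rewrite ?rt2_silver, ?rt2_conj_silver; try lra; try (field; lra).
    apply Hsolv; nra.
  - apply (two_grid_points_mul (-1) 1 (silver * x1) (silver * x1 + silver * d)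
             (- / silver * (y1 + D)) (- / silver * (y1 + D) + / silver * D));
      rewrite ?rt2_silver_inv, ?rt2_conj_silver_inv; try lra; try (field; lra).
    apply Hsolv; [nra|].
    replace (silver * d * (/ silver * D)) with (d * D) by (field; lra); lra.
Qed.

Lemma two_grid_points_of_area x1 x2 y1 y2 :
  x1 < x2 -> y1 < y2 -> 2 * silver ^ 2 <= (x2 - x1) * (y2 - y1) ->
  two_grid_points x1 x2 y1 y2.
Proof.
  intros Hx Hy Harea; pose proof silver_bounds.
  assert (Hsolv : grid_solvable_width (x2 - x1)).
  { apply (scale_invariant_pos grid_solvable_width silver 2); try lra.
    - intros d Hd x y D HD HdD; apply two_grid_points_of_normalized; lra.
    - exact grid_solvable_width_scale. }
  replace x2 with (x1 + (x2 - x1)) by ring; replace y2 with (y1 + (y2 - y1)) by ring.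
  apply Hsolv; lra.
Qed.

Lemma div_sqrt2 x : x / sqrt 2 = x * sqrt 2 / 2.
Proof.
  pose proof sqrt2_bounds; pose proof sqrt2_sq as E.
  set (s := sqrt 2) in *; rewrite <- E; field; lra.
Qed.

(* The element (a + m sqrt 2) + i (c + n sqrt 2), using sqrt 2 = w - w^3 and i sqrt 2 = w + w^3. *)
Definition zomega_of_coords (a m c n : Z) : Zomega := mkZomega a (m + n) c (n - m).

Lemma Zomega_val_of_coords a m c n :
  Zomega_val (zomega_of_coords a m c n) = (rt2 a m, rt2 c n).
Proof.
  unfold Zomega_val, zomega_of_coords, rt2; simpl; rewrite !plus_IZR, !minus_IZR, !div_sqrt2.
  f_equal; field.
Qed.

Lemma Zomega_val_bullet_of_coords a m c n :
  Zomega_val (Zomega_bullet (zomega_of_coords a m c n)) = (rt2_conj a m, rt2_conj c n).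
Proof.
  unfold Zomega_val, Zomega_bullet, zomega_of_coords, rt2_conj; simpl.
  rewrite !opp_IZR, !plus_IZR, !minus_IZR, !div_sqrt2.
  f_equal; field.
Qed.

Definition square (c : point) (h : R) (p : point) : Prop :=
  fst c - h <= fst p <= fst c + h /\ snd c - h <= snd p <= snd c + h.

Lemma square_sub_disk c rho p : 0 <= rho -> square c (rho / sqrt 2) p -> disk c rho p.
Proof.
  intros Hrho Hp; pose proof sqrt2_bounds; pose proof sqrt2_sq; unfold disk.
  set (h := rho / sqrt 2) in *; destruct Hp as [Hx Hy].
  assert (Erho : rho = sqrt 2 * h) by (unfold h; field; lra).
  assert (Hh : 0 <= h) by nra.
  rewrite Erho; replace ((sqrt 2 * h) ^ 2) with (h ^ 2 + h ^ 2) by nra.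
  apply Rplus_le_compat; apply pow_maj_Rabs; apply Rabs_le; lra.
Qed.

Lemma contains_circle_scale s A r :
  s <> 0 -> contains_circle A r -> contains_circle (scale_set s A) (Rabs s * r).
Proof.
  intros Hs [c Hc]; exists (s * fst c, s * snd c); intros p Hp.
  exists (fst p / s, snd p / s); split.
  - apply Hc; unfold disk in *; cbn [fst snd] in *.
    apply Rmult_le_reg_l with (s ^ 2); [rewrite <- pow2_abs; apply pow_lt, Rabs_pos_lt, Hs|].
    rewrite Rpow_mult_distr, pow2_abs in Hp.
    replace (s ^ 2 * ((fst p / s - fst c) ^ 2 + (snd p / s - snd c) ^ 2)) with
      ((fst p - s * fst c) ^ 2 + (snd p - s * snd c) ^ 2) by (field; exact Hs).
    exact Hp.
  - destruct p; simpl; f_equal; field; exact Hs.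
Qed.

Lemma scale_set_contains_square s A r :
  s <> 0 -> 0 <= r -> contains_circle A r ->
  exists c, forall p, square c (Rabs s * r / sqrt 2) p -> scale_set s A p.
Proof.
  intros Hs Hr HA; destruct (contains_circle_scale s A r Hs HA) as [c Hc].
  exists c; intros p Hp; apply Hc, square_sub_disk; [|exact Hp].
  apply Rmult_le_pos; [apply Rabs_pos | exact Hr].
Qed.

Lemma two_zomega_in_squares cA h cB h' :
  0 < h -> 0 < h' -> silver ^ 2 <= 2 * h * h' ->
  exists u1 u2 : Zomega, Zomega_val u1 <> Zomega_val u2 /\
    (square cA h (Zomega_val u1) /\ square cB h' (Zomega_val (Zomega_bullet u1))) /\
    (square cA h (Zomega_val u2) /\ square cB h' (Zomega_val (Zomega_bullet u2))).
Proof.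
  intros Hh Hh' Harea.
  destruct (two_grid_points_of_area (fst cA - h) (fst cA + h) (fst cB - h') (fst cB + h'))
    as (a1 & m1 & a2 & m2 & Hne & [Hx1 Hx1'] & [Hx2 Hx2']); [lra | lra | nra |].
  destruct (two_grid_points_of_area (snd cA - h) (snd cA + h) (snd cB - h') (snd cB + h'))
    as (c & n & _ & _ & _ & [Hy Hy'] & _); [lra | lra | nra |].
  exists (zomega_of_coords a1 m1 c n), (zomega_of_coords a2 m2 c n).
  rewrite !Zomega_val_of_coords, !Zomega_val_bullet_of_coords.
  split; [intros E; injection E; intros; contradiction|].
  repeat split; simpl; lra.
Qed.

Theorem lemma5p57 (A B : point -> Prop) (k : nat) (r R0 : R) :
  convex A -> convex B ->
  0 <= r -> 0 <= R0 ->
  contains_circle A r -> contains_circle B R0 ->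
  r * R0 >= / (2 ^ k) * (1 + sqrt 2) ^ 2 ->
  exists u1 u2 : Zomega,
    Zomega_val u1 <> Zomega_val u2 /\
    scaled_grid_solution A B k u1 /\ scaled_grid_solution A B k u2.
Proof.
  intros _ _ Hr HR0 HA HB Hprod.
  pose proof sqrt2_bounds; pose proof sqrt2_sq.
  set (s := sqrt 2 ^ k).
  assert (Hs : 0 < s) by (apply pow_lt; lra).
  assert (Hs' : (- sqrt 2) ^ k <> 0) by (apply pow_nonzero; intro; lra).
  assert (Habs : Rabs ((- sqrt 2) ^ k) = s)
    by (unfold s; rewrite <- RPow_abs, Rabs_Ropp, Rabs_pos_eq; [reflexivity | lra]).
  assert (Harea : silver ^ 2 <= s ^ 2 * (r * R0)).
  { replace (s ^ 2) with (2 ^ k)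
      by (unfold s; rewrite <- pow_mult, Nat.mul_comm, pow_mult; f_equal; simpl; lra).
    apply Rmult_le_reg_l with (/ 2 ^ k); [apply Rinv_0_lt_compat, pow_lt; lra|].
    rewrite <- Rmult_assoc, Rinv_l by (apply pow_nonzero; lra); fold silver in Hprod; lra. }
  assert (Hpos : 0 < s * r / sqrt 2 /\ 0 < s * R0 / sqrt 2).
  { pose proof silver_bounds.
    destruct Hr as [Hr | <-], HR0 as [HR0 | <-]; [|nra..].
    split; apply Rdiv_lt_0_compat; nra. }
  destruct (scale_set_contains_square s A r ltac:(intro; lra) Hr HA) as [cA HcA].
  destruct (scale_set_contains_square _ B R0 Hs' HR0 HB) as [cB HcB].
  rewrite Rabs_pos_eq in HcA by lra; rewrite Habs in HcB.
  destruct (two_zomega_in_squares cA (s * r / sqrt 2) cB (s * R0 / sqrt 2))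
    as (u1 & u2 & Hne & [HA1 HB1] & [HA2 HB2]).
  - apply Hpos.
  - apply Hpos.
  - rewrite !div_sqrt2.
    replace (2 * _ * _) with (s ^ 2 * (r * R0) * (sqrt 2 * sqrt 2) / 2) by field.
    rewrite sqrt2_sq; lra.
  - exists u1, u2; repeat split; auto.
Qed.
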